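(* Let $\|\cdot\|$ be a norm on $\mathbb{R}^d$ and let $\mathbf{X}$ be a random vector in $\mathbb{R}^d$ such that (C1) for every $y>0$ the truncated distribution $\mathbb{P}(\mathbf{X}\in\cdot\mid\|\mathbf{X}\|\le y)$ is nondegenerate (no hyperplane $\mathcal{H}$ has $\mathbb{P}(\mathbf{X}\in\mathcal{H}\mid\|\mathbf{X}\|\le y)=1$), and (C2) the distribution of $\|\mathbf{X}\|$ is absolutely continuous and regularly varying at infinity with index $-\alpha$, $\alpha>0$. Suppose moreover $\alpha\in(2,3]$. Then there exist $C>0$ and $\delta>0$ with $\mathbb{P}(\|\mathbf{X}\|\le\delta)<1$ such that $$\|\Sigma(y)^{-1/2}\|\le C\quad\text{for all } y\ge\delta.$$
   Context: $\Sigma(y)$ is the covariance matrix of the truncated distribution $\mathbb{P}(\mathbf{X}\in\cdot\mid\|\mathbf{X}\|\le y)$, and $\|\Sigma(y)^{-1/2}\|$ is the operator norm of the inverse square root of this (positive definite) matrix. Regular variation of $\|\mathbf{X}\|$ with index $-\alpha$ means $\mathbb{P}(\|\mathbf{X}\|>tx)/\mathbb{P}(\|\mathbf{X}\|>t)\to x^{-\alpha}$ as $t\to\infty$ for every $x>0$. *)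

From HB Require Import structures.
From mathcomp Require Import all_boot all_order all_algebra.
From mathcomp Require Import all_classical all_reals all_analysis.
Set Implicit Arguments. Unset Strict Implicit. Unset Printing Implicit Defensive.
Import Order.TTheory GRing.Theory Num.Theory.
Import numFieldNormedType.Exports.
Local Open Scope classical_set_scope.
Local Open Scope ring_scope.

Section Defs.
Context {R : realType} {n : nat}.

Definition is_norm (N : 'rV[R]_n -> R) : Prop :=
  [/\ forall x, N x = 0 -> x = 0,
      forall (a : R) x, N (a *: x) = `|a| * N x &
      forall x y, N (x + y) <= N x + N y].

Definition enorm (v : 'cV[R]_n) : R := Num.sqrt (\sum_i v i 0 ^+ 2).

Definition opnorm (A : 'M[R]_n) : R :=
  sup [set enorm (A *m v) | v in [set v : 'cV[R]_n | enorm v = 1]].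

Definition posdefmx (S : 'M[R]_n) : Prop :=
  S^T = S /\ forall v : 'cV[R]_n, v != 0 -> 0 < (v^T *m S *m v) 0 0.

(* Sigma^{-1/2}: the (unique) symmetric positive definite S with S S A = 1;
   defaults to 0 if none exists. *)
Definition invsqrtmx (A : 'M[R]_n) : 'M[R]_n :=
  match pselect (exists S : 'M[R]_n, posdefmx S /\ S *m S *m A = 1%:M) with
  | left h => projT1 (cid h)
  | right _ => 0
  end.

Context {d0 : measure_display} {T : measurableType d0} (P : probability T R).
Context (X : 'I_n -> {RV P >-> R}) (N : 'rV[R]_n -> R).

Definition vecX (w : T) : 'rV[R]_n := \row_i X i w.
Definition normX (w : T) : R := N (vecX w).

Definition trunc_event (y : R) : set T := [set w | normX w <= y].

Definition cond_prob (y : R) (A : set T) : R :=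
  fine (P (A `&` trunc_event y)) / fine (P (trunc_event y)).

Definition cond_exp (y : R) (f : T -> R) : R :=
  fine (\int[P]_(w in trunc_event y) (f w)%:E) / fine (P (trunc_event y)).

Definition trunc_cov (y : R) : 'M[R]_n :=
  \matrix_(i, j) (cond_exp y (fun w => X i w * X j w)
                  - cond_exp y (X i) * cond_exp y (X j)).

Definition hyperplane_event (a : 'rV[R]_n) (b : R) : set T :=
  [set w | \sum_i a 0 i * X i w = b].

End Defs.

From HB Require Import structures.
From mathcomp Require Import all_boot all_order all_algebra.
From mathcomp Require Import all_classical all_reals all_analysis.
From mathcomp Require Import measurable_realfun ring lra.
Import Order.TTheory GRing.Theory Num.Theory.
Import numFieldNormedType.Exports.
Local Open Scope classical_set_scope.
Local Open Scope ring_scope.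

(* Regular variation only enters through its consequence that ||X|| is
   unbounded, which yields delta > 0 with P(||X|| <= delta) < 1.  By (C1), Sigma(delta) is
   positive definite, say Sigma(delta) >= c I.  For y >= delta the second
   moment of v.X about the y-mean, restricted to {||X|| <= y}, dominates the
   one restricted to {||X|| <= delta}, which in turn dominates the variance
   there; this gives P(||X|| <= delta) Sigma(delta) <= Sigma(y).  Hence
   Sigma(y) >= k I with k = P(||X|| <= delta) c, and any symmetric S with
   S S Sigma(y) = 1 satisfies |S v|^2 <= |v|^2 / k. *)

Lemma entry_le_mx_norm {R : realDomainType} {m n : nat} (x : 'M[R]_(m, n)) i j :
  `|x i j| <= `|x|.
Proof.
by rewrite [leRHS]/Num.norm /= mx_normrE; apply/bigmax_geP; right; exists (i, j).
Qed.

Section NormOnRowVectors.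
Context {R : realType} {n : nat} (N : 'rV[R]_n -> R).
Hypothesis normN : is_norm N.
Implicit Types x z : 'rV[R]_n.

Lemma is_norm0 : N 0 = 0.
Proof. by case: normN => _ NZ _; rewrite -(scale0r 0) NZ normr0 mul0r. Qed.

Lemma is_normN x : N (- x) = N x.
Proof. by case: normN => _ NZ _; rewrite -scaleN1r NZ normrN1 mul1r. Qed.

Lemma is_norm_ge0 x : 0 <= N x.
Proof.
case: normN => _ _ ND; have := ND x (- x).
rewrite subrr is_norm0 is_normN; lra.
Qed.

Definition norm_basis_sum := \sum_i N (delta_mx 0 i).

Lemma norm_basis_sum_ge0 : 0 <= norm_basis_sum.
Proof. by apply: sumr_ge0 => i _; exact: is_norm_ge0. Qed.

Lemma is_norm_le_coord x : N x <= \sum_i `|x 0 i| * N (delta_mx 0 i).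
Proof.
case: normN => _ NZ ND; rewrite {1}(matrix_sum_delta x) big_ord1.
apply: (big_ind2 (fun u r => N u <= r)) => [|u a v b Nu Nv|i _].
- by rewrite is_norm0.
- exact: le_trans (ND u v) (lerD Nu Nv).
- by rewrite NZ.
Qed.

Lemma is_norm_lipschitz x z r : (forall i, `|x 0 i - z 0 i| <= r) ->
  N x - N z <= r * norm_basis_sum.
Proof.
case: normN => _ _ ND xz; rewrite lerBlDr.
have := ND (x - z) z; rewrite subrK => /le_trans; apply; rewrite lerD2r.
apply: le_trans (is_norm_le_coord _) _; rewrite mulr_sumr; apply: ler_sum => i _.
by rewrite !mxE ler_wpM2r ?is_norm_ge0.
Qed.

Lemma is_norm_continuous : continuous N.
Proof.
move=> x; apply/(@cvgrPdist_lt _ _ _ _ (nbhs_filter x)) => e e_gt0.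
have K_gt0 : 0 < norm_basis_sum + 1 := ltr_wpDl norm_basis_sum_ge0 ltr01.
have := @cvgr_dist_lt _ _ _ (nbhs x) (nbhs_filter x) id x cvg_id (e / (norm_basis_sum + 1)).
move=> /(_ (divr_gt0 e_gt0 K_gt0)); apply: filterS => z xz.
have Nxz : `|N x - N z| <= `|x - z| * norm_basis_sum.
  have coord i : `|x 0 i - z 0 i| <= `|x - z|.
    by have := entry_le_mx_norm (x - z) 0 i; rewrite !mxE.
  rewrite ler_norml lerNl opprB; apply/andP; split; apply: is_norm_lipschitz => i //.
  by rewrite distrC.
rewrite /= ltr_pdivlMr // in xz; apply: le_lt_trans Nxz (le_lt_trans _ xz).
by apply: ler_wpM2l => //; rewrite lerDl.
Qed.

Lemma is_norm_coord_bound : exists2 M, 0 < M & forall x i, `|x 0 i| <= M * N x.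
Proof.
have [[i0 _]|no_index] := pselect (exists i : 'I_n, True); last first.
  by exists 1 => // x i; case: no_index; exists i.
pose S := [set x : 'rV[R]_n | `|x| = 1].
have S_normalize x : x != 0 -> S (`|x|^-1 *: x).
  by move=> x0; rewrite /S /= normrZ normfV normr_id mulVf ?normr_eq0.
have S0 : S !=set0.
  exists (`|delta_mx 0 i0 : 'rV[R]_n|^-1 *: delta_mx 0 i0); apply: S_normalize.
  by apply/negP => /eqP/matrixP/(_ 0 i0)/eqP; rewrite !mxE !eqxx oner_eq0.
have S_compact : compact S.
  apply: bounded_closed_compact.
    by exists 1; split => // M M1 x /= ->; exact: ltW.
  rewrite (_ : S = Num.norm @^-1` [set 1 : R]) //.
  apply: preimage_closed; last exact: closed_eq.
  by move=> x _; exact: norm_continuous.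
have [c /set_mem Sc c_min] := EVT_min_rV S0 S_compact
  (continuous_subspaceT is_norm_continuous).
have Nc_gt0 : 0 < N c.
  case: normN => N0 _ _; rewrite lt_def is_norm_ge0 andbT; apply/eqP => /N0 c0.
  by move: Sc; rewrite /S /= c0 normr0 => /esym/eqP; rewrite oner_eq0.
exists (N c)^-1; first by rewrite invr_gt0.
move=> x i; apply: le_trans (entry_le_mx_norm x 0 i) _.
have [->|x0] := eqVneq x 0; first by rewrite normr0 is_norm0 mulr0.
have := c_min _ (mem_set (S_normalize _ x0)).
case: normN => _ NZ _; rewrite NZ normfV normr_id.
rewrite mulrC ler_pdivlMr ?normr_gt0 // => h.
by rewrite mulrC ler_pdivlMr // mulrC.
Qed.

End NormOnRowVectors.

Section QuadraticForms.
Context {R : realFieldType} {n : nat}.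
Implicit Types (M S A : 'M[R]_n) (v x y z : 'cV[R]_n).

Definition bform M x y := \sum_i \sum_j x i 0 * M i j * y j 0.
Definition sqnorm v := \sum_i v i 0 ^+ 2.

Lemma sqnorm_ge0 v : 0 <= sqnorm v.
Proof. by apply: sumr_ge0 => i _; exact: sqr_ge0. Qed.

Lemma bformE M x y : bform M x y = \sum_i x i 0 * (M *m y) i 0.
Proof.
apply: eq_bigr => i _; rewrite mxE mulr_sumr.
by apply: eq_bigr => j _; rewrite mulrA.
Qed.

Lemma bformC M x y : M^T = M -> bform M x y = bform M y x.
Proof.
move=> symM; rewrite /bform exchange_big; apply: eq_bigr => i _.
apply: eq_bigr => j _; rewrite -[in RHS]symM mxE; ring.
Qed.

Lemma bform_expand M x y t : bform M (t *: x - y) (t *: x - y) =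
  t ^+ 2 * bform M x x - t * (bform M x y + bform M y x) + bform M y y.
Proof.
rewrite /bform mulrDr opprD addrA !mulr_sumr -!sumrB -big_split /=.
apply: eq_bigr => i _; rewrite !mulr_sumr -!sumrB -big_split /=.
apply: eq_bigr => j _; rewrite !mxE; ring.
Qed.

Lemma sqnorm_ge_mul v i j : `|v i 0 * v j 0| <= sqnorm v.
Proof.
have sq_le k : `|v k 0| ^+ 2 <= sqnorm v.
  rewrite real_normK ?num_real // /sqnorm (bigD1 k) //= lerDl.
  by apply: sumr_ge0 => l _; exact: sqr_ge0.
have := sq_le i; have := sq_le j; have := normr_ge0 (v i 0); have := normr_ge0 (v j 0).
rewrite normrM; nra.
Qed.

Lemma bform_coercive M : M^T = M -> (forall v, v != 0 -> 0 < bform M v v) ->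
  exists2 c, 0 < c & forall v, c * sqnorm v <= bform M v v.
Proof.
move=> symM posM.
have psdM u : 0 <= bform M u u.
  have [->|/posM/ltW //] := eqVneq u 0.
  by rewrite /bform big1 // => i _; rewrite big1 // => j _; rewrite mxE !mul0r.
have unitM : M \in unitmx.
  rewrite -row_free_unit -kermx_eq0 -submx0; apply/rV_subP => u /sub_kermxP uM.
  rewrite submx0; apply: contraT => u0.
  have MuT : M *m u^T = 0 by rewrite -symM -trmx_mul uM trmx0.
  have := posM u^T; rewrite trmx_eq0 bformE MuT big1 ?ltxx => [/(_ u0) //|i _].
  by rewrite !mxE mulr0.
pose K := \sum_i \sum_j `|invmx M i j| + 1.
have K_gt0 : 0 < K.
  by apply: ltr_wpDl ltr01; do 2!apply: sumr_ge0 => ? _; exact: normr_ge0.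
exists K^-1; first by rewrite invr_gt0.
move=> v; pose w := invmx M *m v.
have Mw : M *m w = v by rewrite mulmxA mulmxV // mul1mx.
have Bvw : bform M v w = sqnorm v.
  by rewrite bformE Mw; apply: eq_bigr => i _; rewrite expr2.
have Bwv : bform M w v = sqnorm v by rewrite bformC.
have Bww : bform M w w <= (K - 1) * sqnorm v.
  rewrite bformE Mw addrK mulr_suml; apply: ler_sum => i _.
  rewrite mxE !mulr_suml; apply: ler_sum => j _.
  apply: le_trans (ler_norm _) _; rewrite -mulrA normrM.
  by apply: ler_wpM2l => //; exact: sqnorm_ge_mul.
have := psdM (K *: v - w); rewrite bform_expand Bvw Bwv.
rewrite [K^-1 * _]mulrC ler_pdivrMr //.
have := sqnorm_ge0 v; move: Bww; nra.
Qed.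

(* With z := S S v one has A z = v, so k |z|^2 <= z.A z = v.z = |S v|^2,
   and AM-GM on v.z gives |S v|^2 <= |v|^2 / k. *)
Lemma sqnorm_invsqrt_le S A k : 0 < k -> S^T = S -> S *m S *m A = 1%:M ->
  (forall z, k * sqnorm z <= bform A z z) -> forall v, sqnorm (S *m v) <= sqnorm v / k.
Proof.
move=> k_gt0 symS SSA coerA v.
set u := S *m v; pose z := S *m u.
have Az : A *m z = v.
  by rewrite /z /u !mulmxA -(mulmxA A) (mulmx1C SSA) mul1mx.
have q_vz : sqnorm u = \sum_i v i 0 * z i 0.
  by rewrite -bformE bformC // bformE; apply: eq_bigr => i _; rewrite expr2.
have q_zAz : sqnorm u = bform A z z.
  by rewrite bformE Az q_vz; apply: eq_bigr => i _; rewrite mulrC.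
have amgm : 2 * k * sqnorm u <= sqnorm v + k ^+ 2 * sqnorm z.
  rewrite q_vz /sqnorm !mulr_sumr -big_split; apply: ler_sum => i _ /=.
  by have := sqr_ge0 (v i 0 - k * z i 0); nra.
have := coerA z; rewrite -q_zAz => kz.
rewrite ler_pdivlMr //; nra.
Qed.

End QuadraticForms.

Lemma measurable_set_bool d (T : measurableType d) (b : T -> bool) :
  measurable_fun setT b -> measurable [set w | b w].
Proof. by move=> mb; rewrite -[X in measurable X]setTI; exact: mb. Qed.

Lemma Rintegral_eq0_measureI d (T : measurableType d) (R : realType)
    (mu : {measure set T -> \bar R}) (D Z : set T) (g : T -> R) :
  measurable D -> measurable Z -> mu.-integrable D (EFin \o g) ->
  (forall x, D x -> 0 <= g x) -> (forall x, D x -> g x = 0 -> Z x) ->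
  Rintegral mu D g = 0 -> mu (D `&` Z) = mu D.
Proof.
move=> mD mZ intg g_ge0 g0_Z intg0.
have abs_int0 : (\int[mu]_(x in D) `|(EFin \o g) x| = 0)%E.
  transitivity (\int[mu]_(x in D) (EFin \o g) x)%E.
    by apply: eq_integral => x /set_mem Dx /=; rewrite ger0_norm // g_ge0.
  by rewrite -[LHS]fineK ?(integrable_fin_num mD intg) //; congr EFin.
have [B [mB muB0 sB]] := (ae_eq_integral_abs mu mD (measurable_int _ intg)).1 abs_int0.
rewrite [RHS](measureDI mu mD mZ) [X in (X + _)%E](_ : _ = 0%E) ?add0e //.
apply/eqP; rewrite -measure_le0 -muB0; apply: le_measure; rewrite ?inE //.
  exact: measurableD.
by move=> x [Dx Zx]; apply: sB => /(_ Dx) [] /(g0_Z _ Dx).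
Qed.

Section TruncatedMoments.
Context {R : realType} {n : nat} {d0 : measure_display} {T : measurableType d0}
  {P : probability T R} (X : 'I_n -> {RV P >-> R}) (N : 'rV[R]_n -> R).

Let A y := trunc_event X N y.

Lemma trunc_event_le {y1 y2} : y1 <= y2 -> A y1 `<=` A y2.
Proof. by move=> y12 w /le_trans; apply. Qed.

Lemma trunc_cov_sym y : (trunc_cov X N y)^T = trunc_cov X N y.
Proof.
apply/matrixP => i j; rewrite !mxE mulrC; congr (_ - _).
by congr (cond_exp _ _ _ _); apply/funext => w; rewrite mulrC.
Qed.

Lemma measurable_hyperplane_event a b : measurable (hyperplane_event X a b).
Proof.
have mf : measurable_fun setT (fun w => \sum_i a 0 i * X i w).
  by apply: measurable_sum => i; apply: measurable_funM => //; exact: measurable_funPT.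
by rewrite -[X in measurable X]setTI; exact: (mf measurableT [set b] (measurable_set1 b)).
Qed.

Hypothesis normN : is_norm N.

Let box (q : {ffun 'I_n -> rat}) (r : rat) : set T :=
  \bigcap_i [set w | `|ratr (q i) - X i w| < ratr r].

Let box_index y : set ({ffun 'I_n -> rat} * rat) :=
  [set qr : {ffun 'I_n -> rat} * rat |
    y + ratr qr.2 * norm_basis_sum N < N (\row_i ratr (qr.1 i))].

Lemma norm_gt_bigcup y :
  [set w | y < normX X N w] = \bigcup_(qr in box_index y) box qr.1 qr.2.
Proof.
have K_ge0 := norm_basis_sum_ge0 N normN.
apply/seteqP; split => [w ynx|w [[q r] /= ylt qrw]]; last first.
  have : N (\row_i ratr (q i)) - normX X N w <= ratr r * norm_basis_sum N.
    apply: (is_norm_lipschitz N normN) => // i; rewrite !mxE; exact/ltW/qrw.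
  rewrite /box_index /= in ylt; lra.
set x := vecX X w in ynx.
have [r] : exists r : rat, ratr r \in `]0, (N x - y) / (2 * (norm_basis_sum N + 1))[.
  apply: rat_in_itvoo; rewrite divr_gt0 ?subr_gt0 //; lra.
rewrite in_itv /= => /andP[r_gt0 r_lt].
have [q qx] : exists q : {ffun 'I_n -> rat}, forall i, `|ratr (q i) - X i w| < ratr r.
  have q_ex i : exists c : rat, ratr c \in `](X i w - ratr r), (X i w + ratr r)[.
    by apply: rat_in_itvoo; lra.
  exists [ffun i => xchoose (q_ex i)] => i; rewrite ffunE ltr_distl.
  by have := xchooseP (q_ex i); rewrite in_itv.
exists (q, r); last by move=> i _; exact: qx.
have : N x - N (\row_i ratr (q i)) <= ratr r * norm_basis_sum N.
  by apply: (is_norm_lipschitz N normN) => i; rewrite !mxE distrC; exact/ltW/qx.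
rewrite ltr_pdivlMr in r_lt; last lra.
rewrite /box_index /=; nra.
Qed.

Lemma measurable_norm_gt y : measurable [set w | y < normX X N w].
Proof.
rewrite norm_gt_bigcup bigcup_mkcond.
apply: countable_bigcupT_measurable; first exact: countableP.
move=> qr; case: ifPn => _; last exact: measurable0.
apply: fin_bigcap_measurable; first exact: finite_finset.
move=> i _; apply: measurable_set_bool; apply: measurable_fun_ltr => //.
by apply: measurableT_comp => //; apply: measurable_funB => //; exact: measurable_funPT.
Qed.

Lemma measurable_trunc_event y : measurable (A y).
Proof.
rewrite (_ : A y = ~` [set w | y < normX X N w]); first exact/measurableC/measurable_norm_gt.
by apply/seteqP; split => w /=; rewrite /A /trunc_event /= leNgt => /negP.
Qed.

Let p y := fine (P (A y)).

Lemma trunc_prob_le1 y : p y <= 1.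
Proof.
have mA := measurable_trunc_event y.
by rewrite -[1]/(fine 1%E); apply: fine_le; rewrite ?fin_num_measure ?probability_le1.
Qed.

Lemma trunc_prob_gt0 y : (0 < P (A y))%E -> 0 < p y.
Proof.
have mA := measurable_trunc_event y.
by move=> Py; rewrite fine_gt0 // Py ltey_eq fin_num_measure.
Qed.

Lemma trunc_prob_lt1 y : fine (P [set w | y < normX X N w]) != 0 -> p y < 1.
Proof.
have mA := measurable_trunc_event y.
have -> : P [set w | y < normX X N w] = (1 - p y)%:E.
  rewrite EFinB /p fineK ?fin_num_measure // -probability_setC //; congr (P _).
  by apply/seteqP; split => w /=; rewrite /A /trunc_event /= ltNge => /negP.
rewrite /= subr_eq0 eq_sym => p_neq1.
by rewrite lt_neqAle p_neq1 trunc_prob_le1.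
Qed.

Let mA y : measurable (A y) := measurable_trunc_event y.

Definition trunc_bounded y (f : T -> R) :=
  measurable_fun setT f /\ exists b, forall w, A y w -> `|f w| <= b.

Lemma trunc_bounded_cst y c : trunc_bounded y (fun=> c).
Proof. by split; [exact: measurable_cst | exists `|c|]. Qed.

Lemma trunc_boundedD y f g :
  trunc_bounded y f -> trunc_bounded y g -> trunc_bounded y (fun w => f w + g w).
Proof.
move=> [mf [a fa]] [mg [b gb]]; split; first exact: measurable_funD.
by exists (a + b) => w Aw; apply: le_trans (ler_normD _ _) (lerD (fa w Aw) (gb w Aw)).
Qed.

Lemma trunc_boundedM y f g :
  trunc_bounded y f -> trunc_bounded y g -> trunc_bounded y (fun w => f w * g w).
Proof.
move=> [mf [a fa]] [mg [b gb]]; split; first exact: measurable_funM.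
by exists (a * b) => w Aw; rewrite normrM ler_pM ?fa ?gb.
Qed.

Lemma trunc_bounded_sum y (I : Type) (r : seq I) (F : I -> T -> R) :
  (forall i, trunc_bounded y (F i)) -> trunc_bounded y (fun w => \sum_(i <- r) F i w).
Proof.
move=> bF; elim: r => [|i r IH].
  by under eq_fun do rewrite big_nil; exact: trunc_bounded_cst.
by under eq_fun do rewrite big_cons; exact: trunc_boundedD.
Qed.

Lemma trunc_bounded_coord y i : trunc_bounded y (X i).
Proof.
split; first exact: measurable_funPT.
have [M M_gt0 coordM] := is_norm_coord_bound N normN.
exists (M * y) => w Aw; have := coordM (vecX X w) i; rewrite mxE => /le_trans; apply.
by rewrite ler_wpM2l // ltW.
Qed.

Lemma trunc_bounded_le {y1 y2 f} : y1 <= y2 -> trunc_bounded y2 f -> trunc_bounded y1 f.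
Proof.
by move=> y12 [mf [b fb]]; split => //; exists b => w /(trunc_event_le y12); exact: fb.
Qed.

Lemma trunc_bounded_integrable y f : trunc_bounded y f -> P.-integrable (A y) (EFin \o f).
Proof.
move=> [mf [b fb]]; apply: measurable_bounded_integrable => //.
- by rewrite ltey_eq fin_num_measure.
- exact: measurable_funS mf.
- exists b; split; first exact: num_real.
  by move=> M bM w Aw; apply: le_trans (fb w Aw) (ltW bM).
Qed.

Let I y f := Rintegral P (A y) f.

Lemma trunc_intD y f g : trunc_bounded y f -> trunc_bounded y g ->
  I y (fun w => f w + g w) = I y f + I y g.
Proof. by move=> bf bg; rewrite /I RintegralD // trunc_bounded_integrable. Qed.

Lemma trunc_intZl y c f : trunc_bounded y f -> I y (fun w => c * f w) = c * I y f.
Proof. by move=> bf; rewrite /I RintegralZl // trunc_bounded_integrable. Qed.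

Lemma trunc_int_cst y c : I y (fun=> c) = c * p y.
Proof. by rewrite /I Rintegral_cst. Qed.

Lemma trunc_int_sum y (J : Type) (r : seq J) (F : J -> T -> R) :
  (forall j, trunc_bounded y (F j)) ->
  I y (fun w => \sum_(j <- r) F j w) = \sum_(j <- r) I y (F j).
Proof.
move=> bF; elim: r => [|j r IH].
  by under eq_fun do rewrite big_nil; rewrite big_nil trunc_int_cst mul0r.
under eq_fun do rewrite big_cons.
by rewrite big_cons trunc_intD ?IH //; exact: trunc_bounded_sum.
Qed.

Lemma trunc_int_mono y1 y2 f : y1 <= y2 -> trunc_bounded y2 f -> (forall w, 0 <= f w) ->
  I y1 f <= I y2 f.
Proof.
move=> y12 bf f_ge0; have bf1 := trunc_bounded_le y12 bf.
apply: fine_le; rewrite ?(integrable_fin_num (mA _)) ?trunc_bounded_integrable //.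
apply: ge0_subset_integral => //; last exact: trunc_event_le.
- by apply/measurable_EFinP; exact: measurable_funS bf.1.
- by move=> w _; rewrite lee_fin.
Qed.

Definition projX (v : 'cV[R]_n) w := \sum_i v i 0 * X i w.

Lemma trunc_bounded_projX y v : trunc_bounded y (projX v).
Proof.
apply: trunc_bounded_sum => i.
by apply: trunc_boundedM; [exact: trunc_bounded_cst | exact: trunc_bounded_coord].
Qed.

Lemma bform_trunc_covE y v : bform (trunc_cov X N y) v v =
  (I y (fun w => projX v w ^+ 2) - I y (projX v) ^+ 2 / p y) / p y.
Proof.
have bXX i j : trunc_bounded y (fun w => X i w * X j w).
  by apply: trunc_boundedM; exact: trunc_bounded_coord.
have -> : I y (fun w => projX v w ^+ 2) =
    \sum_i \sum_j v i 0 * v j 0 * I y (fun w => X i w * X j w).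
  transitivity (I y (fun w => \sum_i \sum_j v i 0 * v j 0 * (X i w * X j w))).
    congr (I y _); apply/funext => w; rewrite /projX expr2 big_distrlr /=.
    by apply: eq_bigr => i _; apply: eq_bigr => j _; ring.
  rewrite trunc_int_sum => [|i]; last first.
    by apply: trunc_bounded_sum => j; apply: trunc_boundedM => //; exact: trunc_bounded_cst.
  apply: eq_bigr => i _; rewrite trunc_int_sum => [|j]; last first.
    by apply: trunc_boundedM => //; exact: trunc_bounded_cst.
  by apply: eq_bigr => j _; rewrite trunc_intZl.
have -> : I y (projX v) = \sum_i v i 0 * I y (X i).
  rewrite trunc_int_sum => [|i]; last first.
    by apply: trunc_boundedM; [exact: trunc_bounded_cst | exact: trunc_bounded_coord].
  by apply: eq_bigr => i _; rewrite trunc_intZl //; exact: trunc_bounded_coord.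
rewrite expr2 big_distrlr /= mulr_suml -sumrB mulr_suml.
apply: eq_bigr => i _; rewrite mulr_suml -sumrB mulr_suml.
by apply: eq_bigr => j _; rewrite !mxE /cond_exp /I /Rintegral; ring.
Qed.

Lemma trunc_int_sqdev y v m : 0 < p y ->
  I y (fun w => (projX v w - m) ^+ 2) =
  p y * bform (trunc_cov X N y) v v + (m * p y - I y (projX v)) ^+ 2 / p y.
Proof.
move=> py_gt0; have bZ := trunc_bounded_projX y v.
have bZ2 : trunc_bounded y (fun w => projX v w ^+ 2).
  by under eq_fun do rewrite expr2; exact: trunc_boundedM.
have bM : trunc_bounded y (fun w => - (2 * m) * projX v w).
  by apply: trunc_boundedM => //; exact: trunc_bounded_cst.
have -> : (fun w => (projX v w - m) ^+ 2) =
    (fun w => projX v w ^+ 2 + (- (2 * m) * projX v w + m ^+ 2)).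
  by apply/funext => w; ring.
rewrite trunc_intD //; last exact: trunc_boundedD bM (trunc_bounded_cst _ _).
rewrite trunc_intD //=; last exact: trunc_bounded_cst.
rewrite trunc_intZl // trunc_int_cst bform_trunc_covE.
by field; rewrite gt_eqF.
Qed.

Lemma trunc_int_sqdev_mean y v : 0 < p y ->
  I y (fun w => (projX v w - I y (projX v) / p y) ^+ 2) = p y * bform (trunc_cov X N y) v v.
Proof.
by move=> py_gt0; rewrite trunc_int_sqdev // divfK ?gt_eqF // subrr expr2 !mul0r addr0.
Qed.

Lemma trunc_bounded_sqdev y v m : trunc_bounded y (fun w => (projX v w - m) ^+ 2).
Proof.
have bdev : trunc_bounded y (fun w => projX v w - m).
  by apply: trunc_boundedD; [exact: trunc_bounded_projX | exact: trunc_bounded_cst].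
by under eq_fun do rewrite expr2; exact: trunc_boundedM.
Qed.

Lemma bform_trunc_cov_ge0 y v : 0 < p y -> 0 <= bform (trunc_cov X N y) v v.
Proof.
move=> py_gt0; rewrite -(pmulr_rge0 _ py_gt0) -trunc_int_sqdev_mean //.
by apply: Rintegral_ge0 => w _; exact: sqr_ge0.
Qed.

Lemma trunc_cov_posdef y : (0 < P (A y))%E ->
  (forall (a : 'rV[R]_n) b, a != 0 -> cond_prob X N y (hyperplane_event X a b) != 1) ->
  forall v, v != 0 -> 0 < bform (trunc_cov X N y) v v.
Proof.
move=> Py_gt0 nondeg v v_neq0; have py_gt0 := trunc_prob_gt0 _ Py_gt0.
set m := I y (projX v) / p y.
have vT_neq0 : v^T != 0 by rewrite trmx_eq0.
rewrite lt_def bform_trunc_cov_ge0 // andbT.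
apply: contra (nondeg _ m vT_neq0) => /eqP cov0.
have full : P (A y `&` hyperplane_event X v^T m) = P (A y).
  apply: (@Rintegral_eq0_measureI _ _ _ _ _ _ (fun w => (projX v w - m) ^+ 2)).
  - exact: mA.
  - exact: measurable_hyperplane_event.
  - exact/trunc_bounded_integrable/trunc_bounded_sqdev.
  - by move=> w _; exact: sqr_ge0.
  - move=> w _ /eqP; rewrite sqrf_eq0 subr_eq0 => /eqP <-.
    by apply: eq_bigr => i _; rewrite mxE.
  - by have := trunc_int_sqdev_mean y v py_gt0; rewrite cov0 mulr0.
rewrite /cond_prob setIC full divff //; exact: lt0r_neq0.
Qed.

Lemma trunc_cov_mono y1 y2 v : (0 < P (A y1))%E -> y1 <= y2 ->
  p y1 * bform (trunc_cov X N y1) v v <= bform (trunc_cov X N y2) v v.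
Proof.
move=> Py1_gt0 y12; have p1_gt0 := trunc_prob_gt0 _ Py1_gt0.
have p2_gt0 : 0 < p y2.
  apply/trunc_prob_gt0/(lt_le_trans Py1_gt0)/le_measure; rewrite ?inE ?mA //.
  exact: trunc_event_le.
set m := I y2 (projX v) / p y2.
have sqdev_le : I y1 (fun w => (projX v w - m) ^+ 2) <= I y2 (fun w => (projX v w - m) ^+ 2).
  by apply: trunc_int_mono y12 (trunc_bounded_sqdev _ _ _) _ => w; exact: sqr_ge0.
rewrite trunc_int_sqdev // trunc_int_sqdev_mean // in sqdev_le.
apply: le_trans (le_trans _ sqdev_le) _.
  by rewrite lerDl divr_ge0 ?sqr_ge0 // ltW.
by rewrite ler_piMl ?bform_trunc_cov_ge0 ?trunc_prob_le1.
Qed.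

End TruncatedMoments.

Lemma opnorm_le {R : realType} {n : nat} (M : 'M[R]_n) C : 0 <= C ->
  (forall v, enorm v = 1 -> enorm (M *m v) <= C) -> opnorm M <= C.
Proof.
move=> C_ge0 MC; rewrite /opnorm.
have [->|/set0P img_neq0] := eqVneq [set enorm (M *m v) | v in [set v | enorm v = 1]] set0.
  by rewrite sup0.
by apply: ge_sup => // _ [v /= v1 <-]; exact: MC.
Qed.

Lemma opnorm_invsqrtmx_le {R : realType} {n : nat} (A : 'M[R]_n) k : 0 < k ->
  (forall z, k * sqnorm z <= bform A z z) -> opnorm (invsqrtmx A) <= Num.sqrt k^-1.
Proof.
move=> k_gt0 coerA; apply: opnorm_le => // v v1.
have sqv1 : sqnorm v = 1 by rewrite -[sqnorm v]sqr_sqrtr ?sqnorm_ge0 // -/(enorm v) v1 expr1n.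
rewrite /invsqrtmx; case: pselect => [S_ex|_]; last first.
  by rewrite mul0mx /enorm big1 ?sqrtr0 ?sqrtr_ge0 // => i _; rewrite mxE expr0n.
case: (cid S_ex) => S [[symS _] SSA] /=.
rewrite /enorm; apply: ler_wsqrtr; rewrite -[k^-1]mul1r -sqv1.
exact: (@sqnorm_invsqrt_le _ _ S A k k_gt0 symS SSA coerA v).
Qed.

Lemma selfdiv_cvg1_neq0 {R : realType} (f : R -> R) :
  f t / f t @[t --> +oo] --> (1 : R) -> \forall t \near +oo, f t != 0.
Proof.
move=> /cvgr_neq0 /(_ (oner_neq0 R)); apply: filterS => t.
by rewrite mulf_eq0 invr_eq0 orbb.
Qed.

Theorem lemmaB1 (R : realType) (n : nat) (d0 : measure_display)
  (T : measurableType d0) (P : probability T R)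
  (X : 'I_n -> {RV P >-> R}) (N : 'rV[R]_n -> R) (alpha : R) :
  is_norm N ->
  (* (C1) truncated distributions are well defined and nondegenerate *)
  (forall y : R, 0 < y ->
     (0 < P (trunc_event X N y))%E /\
     forall (a : 'rV[R]_n) (b : R), a != 0 ->
       cond_prob X N y (hyperplane_event X a b) != 1) ->
  (* (C2) law of ||X|| absolutely continuous w.r.t. Lebesgue measure *)
  (forall A : set R, measurable A -> (lebesgue_measure A = 0)%E ->
     P (normX X N @^-1` A) = 0%E) ->
  (* (C2) ||X|| regularly varying at infinity with index -alpha, alpha > 0 *)
  0 < alpha ->
  (forall x : R, 0 < x ->
     fine (P [set w | t * x < normX X N w]) / fine (P [set w | t < normX X N w])
       @[t --> +oo] --> x `^ (- alpha)) ->
  (* alpha in (2, 3] *)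
  2 < alpha <= 3 ->
  exists C : R, 0 < C /\ exists delta : R, 0 < delta /\
    fine (P (trunc_event X N delta)) < 1 /\
    forall y : R, delta <= y -> opnorm (invsqrtmx (trunc_cov X N y)) <= C.
Proof.
move=> normN C1 _ _ regvar _.
(* At x = 1 the ratio is q / q for q = P(||X|| > t); as 0 / 0 = 0, its
   convergence to 1 says exactly that q != 0 for large t. *)
have [delta [delta_gt0 tail_neq0]] :
    exists delta, 0 < delta /\ fine (P [set w | delta < normX X N w]) != 0.
  have := regvar 1 ltr01; under eq_fun do rewrite mulr1; rewrite powR1.
  move=> /selfdiv_cvg1_neq0 tail.
  exact: filter_ex (filterI (nbhs_pinfty_gt (num_real 0)) tail).
have [Pdelta_gt0 nondeg] := C1 delta delta_gt0.
have pdelta_gt0 := trunc_prob_gt0 X N normN _ Pdelta_gt0.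
have [c c_gt0 coer] := bform_coercive _ (trunc_cov_sym X N delta)
  (trunc_cov_posdef X N normN _ Pdelta_gt0 nondeg).
pose k := fine (P (trunc_event X N delta)) * c.
have k_gt0 : 0 < k by rewrite mulr_gt0.
exists (Num.sqrt k^-1); split; first by rewrite sqrtr_gt0 invr_gt0.
exists delta; split => //; split; first exact: (trunc_prob_lt1 X N normN).
move=> y delta_le_y; apply: opnorm_invsqrtmx_le k_gt0 _ => z.
apply: le_trans (trunc_cov_mono X N normN _ _ z Pdelta_gt0 delta_le_y).
by rewrite -mulrA ler_wpM2l ?coer // ltW.
Qed.
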